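(* Let $t>0$, $0<\delta<1$, $k>-t\frac{\ln\left(\frac{2}{1+\delta}-1\right)}{\ln(1+\delta)}$, and $w\ge0$. Then for all sufficiently large $m$, $$\frac{\left(\frac12+\frac12\left(1-\frac{k\ln m}{m}\right)^w\right)^m}{m^{-tw}+(1+\delta)^{-m}}<1.$$
   Context: $\ln$ denotes the natural logarithm. *)

From Stdlib Require Import Reals.
Open Scope R_scope.

(* Put [x = k ln m / m] and [y = w x].
   Then [(1-x)^w <= e^(-y) <= 1/(1+y)], so the base of the numerator is at most
   [1 - y/(2(1+y)) <= exp(-y/(2(1+y)))] and the numerator is at most
   [exp(-w k ln m / (2(1+y)))].  As [y -> 0] and [k > 2t], this is eventually
   at most [m^(-tw)], the first summand of the denominator; the second summand
   is positive. *)
From Stdlib Require Import Reals Lra Psatz.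
Open Scope R_scope.

Lemma exp_le_compat x y : x <= y -> exp x <= exp y.
Proof. intros [Hlt | ->]; [left; exact (exp_increasing _ _ Hlt) | lra]. Qed.

Lemma ln_le_sub1 z : 0 < z -> ln z <= z - 1.
Proof.
  intros Hz. pose proof (exp_ineq1_le (ln z)) as H.
  rewrite exp_ln in H; lra.
Qed.

Lemma ln_ge0 z : 1 <= z -> 0 <= ln z.
Proof.
  intros [Hlt | <-]; [| rewrite ln_1; lra].
  rewrite <- ln_1. left. apply ln_increasing; lra.
Qed.

Lemma ln_le_2sqrt x : 0 < x -> ln x <= 2 * sqrt x.
Proof.
  intros Hx. assert (Hs : 0 < sqrt x) by (apply sqrt_lt_R0; lra).
  replace x with (sqrt x * sqrt x) at 1 by (apply sqrt_sqrt; lra).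
  rewrite ln_mult by lra. pose proof (ln_le_sub1 _ Hs). lra.
Qed.

Lemma ln_div_le eps x : 0 < eps -> 4 / eps ^ 2 <= x -> ln x / x <= eps.
Proof.
  intros Heps Hx.
  assert (Hx0 : 0 < x).
  { apply Rlt_le_trans with (4 / eps ^ 2); [apply Rdiv_lt_0_compat; nra | exact Hx]. }
  assert (Hs : 0 < sqrt x) by (apply sqrt_lt_R0; lra).
  assert (Hss : sqrt x * sqrt x = x) by (apply sqrt_sqrt; lra).
  assert (Hepsx : 4 <= (eps * sqrt x) ^ 2).
  { apply (Rmult_le_compat_l (eps ^ 2)) in Hx; [| nra].
    replace (eps ^ 2 * (4 / eps ^ 2)) with 4 in Hx by (field; lra).
    replace ((eps * sqrt x) ^ 2) with (eps ^ 2 * x) by (rewrite <- Hss at 1; ring).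
    exact Hx. }
  assert (Hepss : 2 <= eps * sqrt x) by (assert (0 < eps * sqrt x) by nra; nra).
  pose proof (ln_le_2sqrt x Hx0).
  apply (Rmult_le_reg_r x); [exact Hx0 |].
  unfold Rdiv. rewrite Rmult_assoc, Rinv_l by lra. nra.
Qed.

Lemma ln_two_div_sub1_le d :
  0 < d < 1 -> ln (2 / (1 + d) - 1) <= - 2 * ln (1 + d).
Proof.
  intros Hd.
  assert (Hq : 0 < 2 / (1 + d) - 1).
  { replace (2 / (1 + d) - 1) with ((1 - d) / (1 + d)) by (field; lra).
    apply Rdiv_lt_0_compat; lra. }
  assert (Hprod : (2 / (1 + d) - 1) * (1 + d) * (1 + d) = 1 - d * d) by (field; lra).
  pose proof (ln_le_sub1 (1 - d * d) ltac:(nra)).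
  rewrite <- Hprod, !ln_mult in * by (try apply Rmult_lt_0_compat; lra). nra.
Qed.

Lemma two_mul_le_ln_threshold t d :
  0 < t -> 0 < d < 1 -> 2 * t <= - t * ln (2 / (1 + d) - 1) / ln (1 + d).
Proof.
  intros Ht Hd.
  assert (Hl : 0 < ln (1 + d)) by (rewrite <- ln_1; apply ln_increasing; lra).
  pose proof (ln_two_div_sub1_le d Hd).
  apply (Rmult_le_reg_r (ln (1 + d))); [exact Hl |].
  replace (- t * ln (2 / (1 + d) - 1) / ln (1 + d) * ln (1 + d))
    with (- t * ln (2 / (1 + d) - 1)) by (field; lra).
  nra.
Qed.

Lemma ln_div_eventually_le c eps :
  0 < c -> 0 < eps ->
  exists M : nat, forall m : nat, (M <= m)%nat ->
    1 <= INR m /\ c * ln (INR m) / INR m <= eps.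
Proof.
  intros Hc Heps.
  destruct (INR_unbounded (Rmax 1 (4 / (eps / c) ^ 2))) as [M HM].
  exists M. intros m Hm.
  apply le_INR in Hm.
  assert (Hbig : Rmax 1 (4 / (eps / c) ^ 2) < INR m) by lra.
  apply Rmax_Rlt in Hbig as [H1 H2].
  split; [lra |].
  assert (Hle : ln (INR m) / INR m <= eps / c)
    by (apply ln_div_le; [apply Rdiv_lt_0_compat |]; lra).
  apply (Rmult_le_compat_l c) in Hle; [| lra].
  replace (c * (eps / c)) with eps in Hle by (field; lra).
  unfold Rdiv in *. rewrite Rmult_assoc. exact Hle.
Qed.

Lemma Rpower_one_sub_le x w :
  0 <= x < 1 -> 0 <= w -> Rpower (1 - x) w <= / (1 + w * x).
Proof.
  intros Hx Hw. unfold Rpower.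
  apply Rle_trans with (exp (- (w * x))).
  - apply exp_le_compat. pose proof (ln_le_sub1 (1 - x) ltac:(lra)). nra.
  - rewrite exp_Ropp. apply Rinv_le_contravar; [nra |].
    pose proof (exp_ineq1_le (w * x)). lra.
Qed.

Lemma pow_le_exp a m : 0 <= a -> a ^ m <= exp (INR m * (a - 1)).
Proof.
  intros Ha.
  replace (exp (INR m * (a - 1))) with (exp (a - 1) ^ m).
  - apply pow_incr. split; [exact Ha |]. pose proof (exp_ineq1_le (a - 1)). lra.
  - rewrite <- Rpower_pow by apply exp_pos. unfold Rpower. rewrite ln_exp. f_equal; ring.
Qed.

Lemma pow_half_mean_Rpower_le (t k w : R) (m : nat) :
  0 <= w -> 1 <= INR m ->
  0 <= k * ln (INR m) / INR m < 1 ->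
  2 * t * (1 + w * (k * ln (INR m) / INR m)) <= k ->
  (/ 2 + / 2 * Rpower (1 - k * ln (INR m) / INR m) w) ^ m <= Rpower (INR m) (- t * w).
Proof.
  intros Hw Hm Hx Hkt.
  set (x := k * ln (INR m) / INR m) in *.
  set (y := w * x) in *.
  assert (Hy : 0 <= y) by (unfold y; nra).
  assert (HL : 0 <= ln (INR m)) by (apply ln_ge0; exact Hm).
  assert (Hmy : INR m * y = w * k * ln (INR m)) by (unfold y, x; field; lra).
  apply Rle_trans with ((/ 2 + / 2 * / (1 + y)) ^ m).
  { apply pow_incr. pose proof (Rpower_one_sub_le x w Hx Hw) as Hpow. fold y in Hpow.
    assert (0 < Rpower (1 - x) w) by apply exp_pos. split; lra. }
  eapply Rle_trans; [apply pow_le_exp |].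
  { assert (0 < / (1 + y)) by (apply Rinv_0_lt_compat; lra). lra. }
  unfold Rpower. apply exp_le_compat.
  replace (INR m * (/ 2 + / 2 * / (1 + y) - 1)) with (- (INR m * y) / (2 * (1 + y)))
    by (field; lra).
  rewrite Hmy.
  apply (Rmult_le_reg_r (2 * (1 + y))); [lra |].
  replace (- (w * k * ln (INR m)) / (2 * (1 + y)) * (2 * (1 + y)))
    with (- (w * k * ln (INR m))) by (field; lra).
  assert (0 <= w * ln (INR m)) by nra. nra.
Qed.

Lemma Rdiv_lt_1_of_le a b p : a <= b -> 0 <= b -> 0 < p -> a / (b + p) < 1.
Proof.
  intros Hab Hb Hp.
  apply (Rmult_lt_reg_r (b + p)); [lra |].
  unfold Rdiv. rewrite Rmult_assoc, Rinv_l by lra. lra.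
Qed.

Theorem lemma6 (t delta k w : R)
  (ht : 0 < t) (hd0 : 0 < delta) (hd1 : delta < 1)
  (hk : k > - t * ln (2 / (1 + delta) - 1) / ln (1 + delta))
  (hw : 0 <= w) :
  exists M : nat, forall m : nat, (M <= m)%nat ->
    (/2 + /2 * Rpower (1 - k * ln (INR m) / INR m) w) ^ m
    / (Rpower (INR m) (- t * w) + / (1 + delta) ^ m) < 1.
Proof.
  pose proof (two_mul_le_ln_threshold t delta ht (conj hd0 hd1)) as H2t.
  set (slack := k / (2 * t) - 1).
  assert (Hslack : 0 < slack).
  { unfold slack. apply (Rmult_lt_reg_r (2 * t)); [lra |]. field_simplify; lra. }
  set (eps := Rmin (/ 2) (slack / (w + 1))).
  assert (Heps : 0 < eps)
    by (apply Rmin_pos; [lra | apply Rdiv_lt_0_compat; lra]).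
  destruct (ln_div_eventually_le k eps ltac:(lra) Heps) as [M HM].
  exists M. intros m Hm. destruct (HM m Hm) as [H1 Hx].
  assert (Hx0 : 0 <= k * ln (INR m) / INR m).
  { pose proof (ln_ge0 _ H1). apply Rmult_le_pos; [nra | left; apply Rinv_0_lt_compat; lra]. }
  assert (Hwx : w * (k * ln (INR m) / INR m) <= slack).
  { assert (Hwe : w * eps <= w * (slack / (w + 1))) by (apply Rmult_le_compat_l, Rmin_r; lra).
    replace (w * (slack / (w + 1))) with (slack - slack / (w + 1)) in Hwe by (field; lra).
    assert (0 < slack / (w + 1)) by (apply Rdiv_lt_0_compat; lra). nra. }
  apply Rdiv_lt_1_of_le.
  - apply pow_half_mean_Rpower_le; [exact hw | exact H1 | split |].
    + exact Hx0.
    + pose proof (Rmin_l (/ 2) (slack / (w + 1))) as Hhalf. fold eps in Hhalf. lra.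
    + replace k with (2 * t * (1 + slack)) at 2 by (unfold slack; field; lra). nra.
  - left. apply exp_pos.
  - apply Rinv_0_lt_compat, pow_lt. lra.
Qed.
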